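(* Let $k,m,n,l$ be positive integers with $nl+ml\le k$ and let $q$ be a prime power. Let $\mathbb{L}$ be the set of $l$-dimensional subspaces of $\mathbb{F}_q^k$ and define $\mathbb{X}=\{\{L_1,\dots,L_n\}\subseteq\mathbb{L}: \dim(L_1+\cdots+L_n)=nl\}$, $\mathbb{Y}=\{\{L_1,\dots,L_m\}\subseteq\mathbb{L}: \dim(L_1+\cdots+L_m)=ml\}$, $\mathbb{Z}=\{\{L_1,\dots,L_{n+m}\}\subseteq\mathbb{L}: \dim(L_1+\cdots+L_{n+m})=(n+m)l\}$. Let $B$ be the bipartite graph with left (user) vertex set $\mathbb{X}$, right (subfile) vertex set $\mathbb{Y}$, and $X$ adjacent to $Y$ iff $X\cup Y\in\mathbb{Z}$. Put $P=\prod_{i=0}^{l-1}\binom{l-i}{1}_q$. Then $B$ is a $(K,F,D)$ bipartite caching graph with $$K=\frac{(l!)^n q^{\frac{n(n-1)l^2}{2}}}{(nl)!\,n!}\cdot\frac{\prod_{i=0}^{nl-1}\binom{k-i}{1}_q}{P^n}\prod_{i=0}^{n-1}\binom{(n-i)l}{l},\qquad F=\frac{(l!)^m q^{\frac{m(m-1)l^2}{2}}}{(ml)!\,m!}\cdot\frac{\prod_{i=0}^{ml-1}\binom{k-i}{1}_q}{P^m}\prod_{i=0}^{m-1}\binom{(m-i)l}{l},$$ admitting an induced matching cover with $$S=\frac{(l!)^{n+m}q^{\frac{(n+m)(n+m-1)l^2}{2}}}{((n+m)l)!\,(n+m)!}\cdot\frac{\prod_{i=0}^{(n+m)l-1}\binom{k-i}{1}_q}{P^{n+m}}\prod_{i=0}^{n+m-1}\binom{(n+m-i)l}{l}$$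 induced matchings, each having $g=\binom{n+m}{n}$ edges; it defines a coded caching scheme (for $N\ge K$ files) with $K$ users, subpacketization $F$, $$\frac{M}{N}=1-q^{mnl^2}\prod_{i=0}^{ml-1}\frac{\binom{k-nl-i}{1}_q}{\binom{k-i}{1}_q},$$ rate $R=S/F$ and global caching gain $\gamma=g$.
   Context: $\binom{a}{1}_q=\frac{q^a-1}{q-1}$; other binomial coefficients $\binom{a}{b}$ are ordinary. Coded caching setup: a server holds $N$ files and is connected by an error-free broadcast link to $K$ users, each with a cache able to store $M$ files; assumed $N\ge K$. Each file is split into $F$ equal-size subfiles indexed by $\mathcal{F}$. Caching is symmetric: each user caches, for each index $f$, the $f$-th subfile of either all files or none. In the delivery phase each user demands one file and the server broadcasts subfile-size transmissions allowing every user to recover its demand, for every demand vector. Rate $R=(\text{number of transmissions})/F$; global caching gain $\gamma=K(1-M/N)/R$. A $(K,F,D)$ bipartite caching graph is a bipartite graph with $K$ left (user) vertices and $F$ right (subfile) vertices, every left vertex of degree $D$; it defines the symmetric caching scheme in which user $k$ does not cache subfile index $f$ exactly when $\{k,f\}$ is an edge (so $M/N=1-D/F$). An induced matching of $B$ is a set $\mathcal{C}\subseteq E(B)$ such that for any two distinct $\{k_1,f_1\},\{k_2,f_2\}\in\mathcal{C}$: $k_1\ne k_2$, $f_1\ne f_2$, $\{k_1,f_2\},\{k_2,f_1\}\notin E(B)$. An induced matching cover is a set of induced matchings partitioning $E(B)$. *)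

From HB Require Import structures.
From mathcomp Require Import all_boot all_order all_algebra all_field.
Set Implicit Arguments. Unset Strict Implicit. Unset Printing Implicit Defensive.
Import Order.TTheory GRing.Theory Num.Theory.

(* Finite-type structure on subspaces of a vector space over a finite field
   (the library provides only the subType structure, internally). *)
Module VsFin.
Import VectorInternalTheory.
HB.instance Definition _ (F : finFieldType) (vT : vectType F) :=
  [Finite of {vspace vT} by <:].
End VsFin.
HB.export VsFin.

Local Open Scope ring_scope.

Definition qbin1 (q a : nat) : rat := ((q%:Q) ^+ a - 1) / (q%:Q - 1).

Definition Pq (q l : nat) : rat := \prod_(i < l) qbin1 q (l - i).

(* The common counting expression appearing in K (with t = n), F (t = m),
   S (t = n + m):
   (l!)^t q^{t(t-1)l^2/2} / ((tl)! t!) * prod_{i<tl}[k-i]_q / P^t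
     * prod_{i<t} C((t-i)l, l). *)
Definition count_expr (q k t l : nat) : rat :=
  ((l`!)%:Q ^+ t * (q%:Q) ^+ ((t * (t - 1) * l ^ 2) %/ 2))
    / ((t * l)`!%:Q * (t`!)%:Q)
  * ((\prod_(i < t * l) qbin1 q (k - i)) / Pq q l ^+ t)
  * \prod_(i < t) ('C((t - i) * l, l))%:Q.

Definition MN_expr (q k n m l : nat) : rat :=
  1 - (q%:Q) ^+ (m * n * l ^ 2)
      * \prod_(i < m * l) (qbin1 q (k - n * l - i) / qbin1 q (k - i)).

Section Grass.
Variables (F : finFieldType) (k : nat).

Definition indep_family (l t : nat) : {set {set {vspace 'rV[F]_k}}} :=
  [set A : {set {vspace 'rV[F]_k}} |
     [&& #|A| == t, [forall L in A, \dim L == l]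
       & \dim (\sum_(L in A) L)%VS == t * l]].
End Grass.

Section Bip.
Variables (U V : finType) (Lv : {set U}) (Rv : {set V}) (adj : U -> V -> bool).

Definition bip_edges : {set U * V} :=
  [set e | [&& e.1 \in Lv, e.2 \in Rv & adj e.1 e.2]].

Definition bip_deg (x : U) : nat := #|[set y in Rv | adj x y]|.

Definition induced_matching (C : {set U * V}) : bool :=
  (C \subset bip_edges) &&
  [forall e1 in C, forall e2 in C, (e1 != e2) ==>
     [&& e1.1 != e2.1, e1.2 != e2.2,
         (e1.1, e2.2) \notin bip_edges & (e2.1, e1.2) \notin bip_edges]].

Definition induced_matching_cover (P : {set {set U * V}}) : bool :=
  partition P bip_edges && [forall C in P, induced_matching C].
End Bip.

(* An l-dimensional subspace L of U meeting W trivially is grown one vector at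
   a time, each new vector avoiding W + (current span); double counting these
   chains gives #{L} * b_l = prod_(j<l) (q^dim U - q^(dim W + j)), where
   b_l = prod_(j<l) (q^l - q^j) counts the ordered bases of F_q^l.  Choosing the
   members of a family one by one, the t-families of l-spaces whose sum with W
   is direct number prod_(j<tl) (q^k - q^(dim W + j)) / (t! b_l^t); this depends
   on W only through dim W.  The neighbours of a user X are the m-families
   independent over the span of X, which has dimension nl, so the graph is
   regular.  An edge (X, Y) has disjoint ends and is one of the C(n+m, n)
   splittings of the independent (n+m)-family X :|: Y; the splittings of a fixed
   family form an induced matching, since an edge (X1, Z :\: X2) forces X1 to lie
   in X2.  Counting edges both ways gives K * D = S * C(n+m, n), hence the gain. *)

From HB Require Import structures.
From mathcomp Require Import all_boot all_order all_algebra all_field.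
From mathcomp Require Import zify ring.
Import Order.TTheory GRing.Theory Num.Theory.
Set Implicit Arguments. Unset Strict Implicit. Unset Printing Implicit Defensive.

Lemma card_set_nat (T : finType) (A : {set T}) (P : pred T) :
  #|[set x in A | P x]| = \sum_(x in A) P x.
Proof.
rewrite -sum1_card [in LHS]big_mkcond [in RHS]big_mkcond /=.
by apply: eq_bigr => x _; rewrite !inE; case: (x \in A); case: (P x).
Qed.

Lemma double_count (T1 T2 : finType) (A : {set T1}) (B : {set T2}) (R : T1 -> T2 -> bool) :
  \sum_(a in A) #|[set b in B | R a b]| = \sum_(b in B) #|[set a in A | R a b]|.
Proof.
under eq_bigr do rewrite card_set_nat.
under [RHS]eq_bigr do rewrite card_set_nat.
exact: exchange_big.
Qed.

Section BipartiteCounting.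
Variables (U V : finType) (Lv : {set U}) (Rv : {set V}) (adj : U -> V -> bool).

Lemma card_bip_edges : #|bip_edges Lv Rv adj| = \sum_(x in Lv) bip_deg Rv adj x.
Proof.
rewrite /bip_deg -sum1_card; under [RHS]eq_bigr do rewrite -sum1_card.
by rewrite pair_big_dep /=; apply: eq_bigl => -[x y]; rewrite !inE.
Qed.

Lemma card_bip_edges_regular D : {in Lv, forall x, bip_deg Rv adj x = D} ->
  #|bip_edges Lv Rv adj| = #|Lv| * D.
Proof. by move=> regD; rewrite card_bip_edges -sum_nat_const; apply: eq_bigr. Qed.

Lemma card_bip_edges_cover P g : induced_matching_cover Lv Rv adj P ->
  {in P, forall C : {set U * V}, #|C| = g} -> #|bip_edges Lv Rv adj| = #|P| * g.
Proof. by case/andP => partP _ unifP; apply: card_uniform_partition. Qed.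

End BipartiteCounting.

Section Splittings.
Variables (T : finType) (n : nat) (Z : {set T}).
Implicit Types e : {set T} * {set T}.

Definition splittings : {set {set T} * {set T}} :=
  [set (X, Z :\: X) | X in [set X : {set T} | (X \subset Z) && (#|X| == n)]].

Lemma splittingsP e :
  reflect [/\ e.1 \subset Z, #|e.1| = n & e.2 = Z :\: e.1] (e \in splittings).
Proof.
apply: (iffP imsetP) => [[X] |[sXZ cX e2E]].
  by rewrite inE => /andP[sXZ /eqP cX] ->.
by exists e.1; [rewrite inE sXZ cX eqxx | case: e e2E {sXZ cX} => /= ? ? ->].
Qed.

Lemma card_splittings : #|splittings| = 'C(#|Z|, n).
Proof. by rewrite card_imset ?cards_draws // => X1 X2 /pair_equal_spec[]. Qed.

Lemma splittingsU e : e \in splittings -> e.1 :|: e.2 = Z.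
Proof. by case/splittingsP => sXZ _ ->; rewrite -{2}(setID Z e.1) (setIidPr sXZ). Qed.

Lemma splittingsI e : e \in splittings -> e.1 :&: e.2 = set0.
Proof. by case/splittingsP => _ _ ->; rewrite setDE setICA setICr setI0. Qed.

Lemma splittings_cross e1 e2 : e1 \in splittings -> e2 \in splittings ->
  e1.1 :&: e2.2 = set0 -> e1 = e2.
Proof.
case/splittingsP => sX1Z cX1 e1E /splittingsP[_ cX2 e2E] dis.
have eX : e1.1 = e2.1.
  apply/eqP; rewrite eqEcard cX1 cX2 leqnn andbT; apply/subsetP => x xX1.
  apply: contraT => xX2; have : x \in e1.1 :&: e2.2 by rewrite e2E !inE xX1 xX2 (subsetP sX1Z).
  by rewrite dis inE.
by case: e1 e2 e1E e2E eX {sX1Z cX1 cX2 dis} => ? ? [? ?] /= -> -> ->.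
Qed.

End Splittings.

Definition nbases (q l : nat) : nat := \prod_(j < l) (q ^ l - q ^ j).

Section Subspaces.
Variables (F : finFieldType) (k : nat).
Local Notation vT := 'rV[F]_k.
Local Notation q := #|F|.
Implicit Types (U W L : {vspace vT}) (v : vT) (A B X Y Z : {set {vspace vT}}) (l t : nat).

Lemma dimv_add_line W v : \dim (W + <[v]>)%VS = (\dim W + (v \notin W))%N.
Proof.
have [vW|vW] /= := boolP (v \in W).
  by rewrite addn0; congr (\dim _); apply/addv_idPl; rewrite -memvE.
have v0 : v != 0%R by apply: contraNneq vW => ->; rewrite mem0v.
rewrite dimv_disjoint_sum ?dim_vline ?v0 //.
apply/eqP; rewrite -subv0; apply/subvP => w; rewrite memv_cap memv0.
case/andP => wW /vlineP[c wc]; subst w.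
have [->|c0] := eqVneq c 0%R; first by rewrite scale0r.
by case/negP: vW; rewrite -(scalerK c0 v) memvZ.
Qed.

Lemma dimv_direct_subr W L L' : \dim (W + L)%VS = (\dim W + \dim L)%N ->
  (L' <= L)%VS -> \dim (W + L')%VS = (\dim W + \dim L')%N.
Proof.
move=> dWL sL'L; have := dimv_sum_cap W L; have := dimv_sum_cap W L'.
have : \dim (W :&: L') <= \dim (W :&: L) by apply/dimvS/capvS.
lia.
Qed.

Lemma card_vspaceD U W : (W <= U)%VS ->
  #|[set v | (v \in U) && (v \notin W)]| = (q ^ \dim U - q ^ \dim W)%N.
Proof.
move=> sWU; rewrite -!card_vspace.
have -> : [set v | (v \in U) && (v \notin W)] = [set v in U] :\: [set v in W].
  by apply/setP => v; rewrite !inE andbC.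
rewrite cardsD (setIidPr _) ?cardsE //.
by apply/subsetP => v; rewrite !inE; apply: (subvP sWU).
Qed.

Definition indep_subspaces U W l : {set {vspace vT}} :=
  [set L | [&& (L <= U)%VS, \dim L == l & \dim (W + L)%VS == \dim W + l]].

Lemma indep_subspacesP U W l L : reflect
  [/\ (L <= U)%VS, \dim L = l & \dim (W + L)%VS = (\dim W + l)%N]
  (L \in indep_subspaces U W l).
Proof. by rewrite inE; apply: (iffP and3P) => -[? /eqP ? /eqP ?]. Qed.

Lemma indep_subspaces0 U W : indep_subspaces U W 0 = [set 0%VS].
Proof.
apply/setP => L; rewrite !inE dimv_eq0 addn0; apply/and3P/eqP => [[] // _ /eqP //|->].
by rewrite sub0v addv0.
Qed.

Lemma indep_subspaces_sub U W l L : L \in indep_subspaces U W l.+1 ->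
  [set L' in indep_subspaces U W l | (L' <= L)%VS] = indep_subspaces L 0 l.
Proof.
case/indep_subspacesP => sLU dL dWL; apply/setP => L'.
rewrite !inE dimv0 add0v add0n; apply/idP/idP.
  by case/andP => /and3P[_ -> _] ->; rewrite andbT.
case/and3P => sL'L /eqP dL' _.
rewrite sL'L (subv_trans sL'L sLU) dL' eqxx /=.
by rewrite (dimv_direct_subr (L := L)) ?dL' ?eqxx // dWL dL.
Qed.

Section Extension.
Variables (U W L' : {vspace vT}) (l : nat).
Hypotheses (sWU : (W <= U)%VS) (L'_indep : L' \in indep_subspaces U W l).

Lemma indep_subspaces_line L v : L \in indep_subspaces U W l.+1 ->
  (L' <= L)%VS -> v \in L -> v \notin L' ->
  [/\ L = (L' + <[v]>)%VS, v \in U & v \notin (W + L')%VS].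
Proof.
case/indep_subspacesP: L'_indep => sL'U dL' dWL'.
case/indep_subspacesP => sLU dL dWL sL'L vL vL'.
have eqL : L = (L' + <[v]>)%VS.
  apply/esym/eqP; rewrite eqEdim subv_add sL'L -memvE vL /=.
  by rewrite dimv_add_line vL' dL' dL addn1.
split => //; first exact: (subvP sLU).
apply: contra_eqN dWL => vWL'.
by rewrite eqL addvA (addv_idPl _) -?memvE // dWL' eqn_add2l ltn_eqF.
Qed.

Lemma indep_subspaces_add_line v : v \in U -> v \notin (W + L')%VS ->
  (L' + <[v]>)%VS \in indep_subspaces U W l.+1.
Proof.
case/indep_subspacesP: L'_indep => sL'U dL' dWL' vU vWL'.
have vL' : v \notin L' by apply: contra vWL'; apply: (subvP (addvSr _ _)).
apply/indep_subspacesP; split.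
- by rewrite subv_add sL'U -memvE.
- by rewrite dimv_add_line vL' dL' addn1.
- by rewrite addvA dimv_add_line vWL' dWL' addn1 addnS.
Qed.

Lemma card_indep_supersets_line v :
  #|[set L in indep_subspaces U W l.+1 | [&& (L' <= L)%VS, v \in L & v \notin L']]|
    = (v \in U) && (v \notin (W + L')%VS).
Proof.
have [/andP[vU vWL']|vUWL'] := boolP (_ && _).
  have vL' : v \notin L' by apply: contra vWL'; apply: (subvP (addvSr _ _)).
  apply/eqP/cards1P; exists (L' + <[v]>)%VS; apply/setP => L; rewrite in_set1 inE.
  apply/idP/eqP => [/and4P[LN sL'L vL _]|->].
    by have [] := indep_subspaces_line LN sL'L vL vL'.
  by rewrite indep_subspaces_add_line // addvSl vL' memvE addvSr.
apply/eqP; rewrite cards_eq0; apply/eqP/setP => L; rewrite in_set0 inE.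
apply/negP => /and4P[LN sL'L vL vL'].
by have [_ vU vWL'] := indep_subspaces_line LN sL'L vL vL'; rewrite vU vWL' in vUWL'.
Qed.

Lemma card_indep_supersets :
  (#|[set L in indep_subspaces U W l.+1 | (L' <= L)%VS]| * (q ^ l.+1 - q ^ l))%N
    = (q ^ \dim U - q ^ (\dim W + l))%N.
Proof.
(* Count the pairs (L, v) with v in L but not in L'; v determines L = L' + <[v]>. *)
case/indep_subspacesP: (L'_indep) => sL'U dL' dWL'.
set S := [set L in _ | _].
have -> : (#|S| * (q ^ l.+1 - q ^ l))%N
    = \sum_(L in S) #|[set v in [set: vT] | (v \in L) && (v \notin L')]|.
  rewrite -sum_nat_const; apply: eq_bigr => L; rewrite inE.
  case/andP => /indep_subspacesP[_ dL _] sL'L.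
  by rewrite -dL -dL' -card_vspaceD //; apply: eq_card => v; rewrite !inE.
have sWL'U : (W + L' <= U)%VS by rewrite subv_add sWU sL'U.
rewrite double_count -dWL' -card_vspaceD // -[in RHS](setTI [set v | _]) card_set_nat.
apply: eq_bigr => v _; rewrite in_set -card_indep_supersets_line; apply: eq_card => L.
by rewrite !inE -!andbA.
Qed.

End Extension.

Lemma card_indep_subspaces l U W : (W <= U)%VS ->
  (#|indep_subspaces U W l| * nbases q l)%N = \prod_(j < l) (q ^ \dim U - q ^ (\dim W + j)).
Proof.
elim: l U W => [|l IH] U W sWU; first by rewrite indep_subspaces0 cards1 /nbases !big_ord0.
set N := indep_subspaces U W l.+1; set N' := indep_subspaces U W l.
have count_sub : ((\sum_(L in N) #|indep_subspaces L 0 l|) * nbases q l)%N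
    = (#|N| * \prod_(j < l) (q ^ l.+1 - q ^ j))%N.
  rewrite big_distrl /= -sum_nat_const; apply: eq_bigr => L.
  case/indep_subspacesP => _ dL _; rewrite IH ?sub0v // dL dimv0.
  by apply: eq_bigr => j _; rewrite add0n.
have count_super :
    ((\sum_(L' in N') #|[set L in N | (L' <= L)%VS]|) * (q ^ l.+1 - q ^ l))%N
    = (#|N'| * (q ^ \dim U - q ^ (\dim W + l)))%N.
  rewrite big_distrl /= -sum_nat_const; apply: eq_bigr => L' L'N.
  exact: card_indep_supersets.
have pairs : \sum_(L in N) #|indep_subspaces L 0 l|
    = \sum_(L' in N') #|[set L in N | (L' <= L)%VS]|.
  rewrite -(double_count N N' (fun L L' => (L' <= L)%VS)).
  by apply: eq_bigr => L LN; rewrite indep_subspaces_sub.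
rewrite /nbases big_ord_recr /= [in RHS]big_ord_recr /= mulnA -count_sub pairs.
by rewrite mulnAC count_super mulnAC -/(nbases q l) IH.
Qed.


Definition family_sum (A : {set {vspace vT}}) : {vspace vT} := (\sum_(L in A) L)%VS.

Definition indep_families W l t : {set {set {vspace vT}}} :=
  [set A : {set {vspace vT}} | [&& #|A| == t, [forall L in A, \dim L == l]
             & \dim (W + family_sum A)%VS == \dim W + t * l]].

Lemma indep_familiesP W l t A : reflect
  [/\ #|A| = t, forall L, L \in A -> \dim L = l
    & \dim (W + family_sum A)%VS = (\dim W + t * l)%N]
  (A \in indep_families W l t).
Proof.
rewrite inE; apply: (iffP and3P) => [[/eqP cA /forall_inP dA /eqP dWA]|[cA dA dWA]].
  by split => // L /dA /eqP.
by split; [apply/eqP | apply/forall_inP => L /dA -> | apply/eqP].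
Qed.

Lemma family_sum0 : family_sum set0 = 0%VS.
Proof. exact: big_set0. Qed.

Lemma family_sumU A B : family_sum (A :|: B) = (family_sum A + family_sum B)%VS.
Proof.
apply/eqP; rewrite eqEsubv subv_add; apply/andP; split.
  apply/subv_sumP => L; rewrite inE => /orP[] LA.
    by apply: subv_trans (addvSl _ _); apply: sumv_sup LA _.
  by apply: subv_trans (addvSr _ _); apply: sumv_sup LA _.
by apply/andP; split; apply/subv_sumP => L LA; apply: (sumv_sup L); rewrite ?inE ?LA ?orbT.
Qed.

Lemma family_sumD1 A L : L \in A -> family_sum A = (L + family_sum (A :\ L))%VS.
Proof. exact: big_setD1. Qed.

Lemma dim_family_sum_leq A l : (forall L, L \in A -> \dim L = l) ->
  \dim (family_sum A) <= #|A| * l.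
Proof.
move=> dA; apply: leq_trans (dimv_leq_sum _ _ _) _.
by rewrite (eq_bigr (fun _ => l)) ?sum_nat_const.
Qed.

Lemma indep_families0 W l : indep_families W l 0 = [set set0].
Proof.
apply/setP => A; rewrite in_set1; apply/indep_familiesP/eqP => [[/cards0_eq //]|->].
by split; [rewrite cards0 | move=> L; rewrite inE | rewrite family_sum0 addv0 addn0].
Qed.

Lemma indep_families_indep_subspaces W l t A L : A \in indep_families W l t ->
  L \in A -> L \in indep_subspaces fullv W l.
Proof.
case/indep_familiesP => cA dA dWA LA; apply/indep_subspacesP; split; [exact: subvf | exact: dA |].
have dA' : forall L', L' \in A :\ L -> \dim L' = l by move=> L'; rewrite inE => /andP[_ /dA].
have cD : #|A :\ L|.+1 = t by rewrite -cA (cardsD1 L A) LA.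
have hS := dim_family_sum_leq dA'.
have [hWLS _] := dimv_add_leqif (W + L) (family_sum (A :\ L)).
have [hWL _] := dimv_add_leqif W L.
rewrite (family_sumD1 LA) addvA -cD mulSn in dWA; rewrite (dA L LA) in hWL.
lia.
Qed.

Section Splitting.
Variables (W L : {vspace vT}) (l : nat).
Hypotheses (l_gt0 : 0 < l) (L_indep : L \in indep_subspaces fullv W l).

Lemma indep_families_notin t A : A \in indep_families (W + L) l t -> L \notin A.
Proof.
case/indep_subspacesP: L_indep => _ _ dWL /indep_familiesP[cA dA dWLA].
apply/negP => LA.
have dA' : forall L', L' \in A :\ L -> \dim L' = l by move=> L'; rewrite inE => /andP[_ /dA].
have cD : #|A :\ L|.+1 = t by rewrite -cA (cardsD1 L A) LA.
have hS := dim_family_sum_leq dA'.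
have [hWLS _] := dimv_add_leqif (W + L) (family_sum (A :\ L)).
rewrite (family_sumD1 LA) addvA -(addvA W) addvv -cD mulSn in dWLA.
lia.
Qed.

Lemma indep_families_split t :
  [set A in indep_families W l t.+1 | L \in A] = (fun A => L |: A) @: indep_families (W + L) l t.
Proof.
case/indep_subspacesP: L_indep => _ _ dWL; apply/setP => A; rewrite inE.
apply/andP/imsetP => [[/indep_familiesP[cA dA dWA] LA]|[A' A'G ->]].
  exists (A :\ L); last by rewrite setD1K.
  apply/indep_familiesP; split.
  - by apply: succn_inj; rewrite -cA (cardsD1 L A) LA.
  - by move=> L'; rewrite inE => /andP[_ /dA].
  - by rewrite -addvA -(family_sumD1 LA) dWA dWL -addnA -mulSn.
have LA' := indep_families_notin A'G.
case/indep_familiesP: A'G => cA dA dWA; split; last exact: setU11.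
apply/indep_familiesP; split.
- by rewrite cardsU1 LA' cA.
- move=> L'; rewrite in_setU1 => /orP[/eqP ->|/dA //].
  by case/indep_subspacesP: L_indep.
- rewrite (family_sumD1 (setU11 L A')) setU1K // addvA dWA dWL.
  by rewrite mulSn addnA.
Qed.

End Splitting.

Lemma card_indep_families_succ W l t : 0 < l ->
  (#|indep_families W l t.+1| * t.+1)%N
    = \sum_(L in indep_subspaces fullv W l) #|indep_families (W + L) l t|.
Proof.
move=> l_gt0; set G := indep_families W l t.+1; set N := indep_subspaces fullv W l.
have -> : (#|G| * t.+1)%N = \sum_(A in G) #|[set L in N | L \in A]|.
  rewrite -sum_nat_const; apply: eq_bigr => A AG.
  case/indep_familiesP: (AG) => <- _ _; apply: eq_card => L; rewrite inE.
  by rewrite andb_idl // => LA; apply: indep_families_indep_subspaces AG LA.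
rewrite (double_count G N (fun A L => L \in A)); apply: eq_bigr => L LN.
rewrite indep_families_split // card_in_imset // => A1 A2 A1G A2G /= eqA.
by rewrite -(setU1K (indep_families_notin l_gt0 LN A1G)) eqA setU1K
  // (indep_families_notin l_gt0 LN A2G).
Qed.

Lemma card_indep_families W l t : 0 < l ->
  (#|indep_families W l t| * t`! * nbases q l ^ t)%N
    = \prod_(j < t * l) (q ^ k - q ^ (\dim W + j)).
Proof.
move=> l_gt0; elim: t W => [|t IH] W; first by rewrite indep_families0 cards1 big_ord0.
rewrite factS expnS (mulnA #|indep_families W l t.+1|) card_indep_families_succ //.
have -> : ((\sum_(L in indep_subspaces fullv W l) #|indep_families (W + L) l t|)
    * t`! * (nbases q l * nbases q l ^ t))%N
  = (\sum_(L in indep_subspaces fullv W l)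
      \prod_(j < t * l) (q ^ k - q ^ (\dim W + l + j))) * nbases q l.
  rewrite !big_distrl /=; apply: eq_bigr => L /indep_subspacesP[_ _ <-].
  by rewrite (mulnC (nbases q l)) mulnA IH.
rewrite sum_nat_const -mulnA (mulnC _ (nbases q l)) mulnA.
rewrite card_indep_subspaces ?subvf // dimvf dim_matrix mul1r.
rewrite mulSn big_split_ord /=; congr (_ * _)%N; apply: eq_bigr => j _.
by rewrite addnA.
Qed.

Lemma nbases_gt0 l : 0 < nbases q l.
Proof. by rewrite prodn_gt0 // => j; rewrite subn_gt0 ltn_exp2l ?finNzRing_gt1. Qed.

Lemma card_indep_families0 l t : 0 < l ->
  (#|indep_families 0%VS l t| * t`! * nbases q l ^ t)%N = \prod_(j < t * l) (q ^ k - q ^ j).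
Proof. by move=> l_gt0; rewrite card_indep_families // dimv0. Qed.

Lemma card_indep_families_dim W1 W2 l t : 0 < l -> \dim W1 = \dim W2 ->
  #|indep_families W1 l t| = #|indep_families W2 l t|.
Proof.
move=> l_gt0 dW; apply/eqP; rewrite -(eqn_pmul2r (fact_gt0 t)).
by rewrite -(eqn_pmul2r (_ : 0 < nbases q l ^ t)) ?expn_gt0 ?nbases_gt0 ?card_indep_families ?dW.
Qed.

Lemma indep_families_gt0 l t : 0 < l -> t * l <= k -> 0 < #|indep_families 0%VS l t|.
Proof.
move=> l_gt0 tl_le_k.
have : 0 < \prod_(j < t * l) (q ^ k - q ^ j).
  rewrite prodn_gt0 // => j; rewrite subn_gt0 ltn_exp2l ?finNzRing_gt1 //.
  exact: leq_trans (ltn_ord j) tl_le_k.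
by rewrite -card_indep_families0 // !muln_gt0 => /andP[/andP[]].
Qed.

Lemma dim_family_sum l t A : A \in indep_families 0%VS l t -> \dim (family_sum A) = t * l.
Proof. by case/indep_familiesP => _ _; rewrite add0v dimv0. Qed.

Lemma family_sumU_dim l A B :
  (forall L, L \in A :|: B -> \dim L = l) ->
  \dim (family_sum (A :|: B)) = #|A| * l + #|B| * l ->
  \dim (family_sum A) = #|A| * l /\ \dim (family_sum B) = #|B| * l.
Proof.
move=> dAB dU.
have hA : \dim (family_sum A) <= #|A| * l.
  by apply: dim_family_sum_leq => L LA; apply: dAB; rewrite inE LA.
have hB : \dim (family_sum B) <= #|B| * l.
  by apply: dim_family_sum_leq => L LB; apply: dAB; rewrite inE LB orbT.
have [hU _] := dimv_add_leqif (family_sum A) (family_sum B).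
rewrite -family_sumU dU in hU; lia.
Qed.

Section Graph.
Variables (l n m : nat).
Local Notation fam t := (indep_families 0%VS l t).
Local Notation adj := (fun A B => A :|: B \in fam (n + m)).
Local Notation edges := (bip_edges (fam n) (fam m) adj).

Lemma indep_families_subset Z X : Z \in fam (n + m) -> X \subset Z -> #|X| = n ->
  X \in fam n /\ Z :\: X \in fam m.
Proof.
move=> ZG sXZ cX; have dSZ := dim_family_sum ZG.
case/indep_familiesP: ZG => cZ dZ _.
have cD : #|Z :\: X| = m by rewrite cardsD (setIidPr sXZ) cZ cX addKn.
have ZE : X :|: (Z :\: X) = Z by rewrite -{2}(setID Z X) (setIidPr sXZ).
have [dX dD] : \dim (family_sum X) = #|X| * l /\ \dim (family_sum (Z :\: X)) = #|Z :\: X| * l.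
  by apply: family_sumU_dim; rewrite ZE // dSZ cX cD mulnDl.
rewrite cX in dX; rewrite cD in dD.
split; apply/indep_familiesP; rewrite add0v dimv0 add0n; split => //.
- by move=> L LX; apply/dZ/(subsetP sXZ).
- by move=> L; rewrite inE => /andP[_ /dZ].
Qed.

Lemma indep_families_disjoint X Y :
  X \in fam n -> Y \in fam m -> X :|: Y \in fam (n + m) -> X :&: Y = set0.
Proof.
case/indep_familiesP => cX _ _ /indep_familiesP[cY _ _] /indep_familiesP[cU _ _].
by apply/eqP; rewrite -cards_eq0; have := cardsUI X Y; rewrite cU cX cY; lia.
Qed.

Lemma indep_families_adj X : 0 < l -> X \in fam n ->
  [set Y in fam m | adj X Y] = indep_families (family_sum X) l m.
Proof.
move=> l_gt0 XG; have dSX := dim_family_sum XG.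
case/indep_familiesP: XG => cX dX _; apply/setP => Y; rewrite inE.
apply/andP/indep_familiesP => [[/indep_familiesP[cY dY _] UG]|[cY dY dSY]].
  by split => //; rewrite dSX -mulnDl -family_sumU (dim_family_sum UG).
have dXY : forall L, L \in X :|: Y -> \dim L = l by move=> L; rewrite inE => /orP[/dX|/dY].
have dSY' : \dim (family_sum Y) = m * l.
  have [hXY _] := dimv_add_leqif (family_sum X) (family_sum Y).
  have := dim_family_sum_leq dY; rewrite cY; rewrite dSY dSX in hXY; lia.
have cU : #|X :|: Y| = n + m.
  have := dim_family_sum_leq dXY; rewrite family_sumU dSY dSX -mulnDl leq_pmul2r //.
  by have := cardsUI X Y; have := subset_leq_card (subsetIl X Y); rewrite cX cY; lia.
split; apply/indep_familiesP; rewrite add0v dimv0 add0n; split => //.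
by rewrite family_sumU dSY dSX mulnDl.
Qed.

Lemma indep_edgeP e :
  reflect [/\ e.1 \in fam n, e.2 \in fam m & e.1 :|: e.2 \in fam (n + m)] (e \in edges).
Proof. by rewrite [X in reflect _ X]inE; apply: and3P. Qed.

Lemma indep_edgeI e : e \in edges -> e.1 :&: e.2 = set0.
Proof. by case/indep_edgeP; apply: indep_families_disjoint. Qed.

Lemma splittings_edges Z : Z \in fam (n + m) -> splittings n Z \subset edges.
Proof.
move=> ZG; apply/subsetP => e eS; case/splittingsP: (eS) => sXZ cX e2E.
have [XG DG] := indep_families_subset ZG sXZ cX.
by apply/indep_edgeP; rewrite (splittingsU eS) e2E.
Qed.

Lemma edge_splittings e : e \in edges -> e \in splittings n (e.1 :|: e.2).
Proof.
move=> eE; have eI := indep_edgeI eE; case/indep_edgeP: eE => /indep_familiesP[cX _ _] _ _.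
apply/splittingsP; split; rewrite ?subsetUl // setDUl setDv set0U.
by apply/esym/setDidPl; rewrite -setI_eq0 setIC eI.
Qed.

Lemma splittings_induced Z : Z \in fam (n + m) ->
  induced_matching (fam n) (fam m) adj (splittings n Z).
Proof.
move=> ZG; apply/andP; split; first exact: splittings_edges.
have cross e1 e2 : e1 \in splittings n Z -> e2 \in splittings n Z ->
    (e1.1, e2.2) \in edges -> e1 = e2.
  by move=> e1S e2S /indep_edgeI; exact: splittings_cross e1S e2S.
apply/forall_inP => e1 e1S; apply/forall_inP => e2 e2S; apply/implyP => ne.
apply/and4P; split.
- apply: contra ne => /eqP eX; apply/eqP/(splittings_cross e1S e2S).
  by rewrite eX (splittingsI e2S).
- apply: contra ne => /eqP eY; apply/eqP/(splittings_cross e1S e2S).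
  by rewrite -eY (splittingsI e1S).
- by apply: contra ne => /(cross _ _ e1S e2S) ->.
- by apply: contra ne => /(cross _ _ e2S e1S) ->.
Qed.

Lemma splittings_neq0 Z : Z \in fam (n + m) -> splittings n Z != set0.
Proof.
case/indep_familiesP => cZ _ _.
by rewrite -card_gt0 card_splittings cZ bin_gt0 leq_addr.
Qed.

Lemma splittings_cover :
  induced_matching_cover (fam n) (fam m) adj [set splittings n Z | Z in fam (n + m)].
Proof.
apply/andP; split; last by apply/forall_inP => C /imsetP[Z ZG ->]; apply: splittings_induced.
apply/and3P; split.
- apply/eqP/setP => e; apply/bigcupP/idP => [[C /imsetP[Z ZG ->]]|eE].
    exact/subsetP/splittings_edges.
  exists (splittings n (e.1 :|: e.2)); last exact: edge_splittings.
  by apply: imset_f; case/indep_edgeP: eE.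
- apply/trivIsetP => C1 C2 /imsetP[Z1 _ ->] /imsetP[Z2 _ ->] ne.
  rewrite -setI_eq0; apply: contraR ne => /set0Pn[e]; rewrite inE => /andP[e1 e2].
  by rewrite -(splittingsU e1) (splittingsU e2).
- by apply/imsetP => -[Z ZG /esym/eqP]; apply/negP/splittings_neq0.
Qed.

Lemma card_splittings_cover :
  #|[set splittings n Z | Z in fam (n + m)]| = #|fam (n + m)|.
Proof.
apply: card_in_imset => Z1 Z2 Z1G _ eqS.
have /set0Pn[e eS] := splittings_neq0 Z1G.
by rewrite -(splittingsU eS); move: eS; rewrite eqS => /splittingsU.
Qed.

Lemma indep_graph_regular X0 : 0 < l -> X0 \in fam n ->
  {in fam n, forall X, bip_deg (fam m) adj X = #|indep_families (family_sum X0) l m|}.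
Proof.
move=> l_gt0 X0G X XG; rewrite /bip_deg indep_families_adj //.
by apply: card_indep_families_dim; rewrite // !(dim_family_sum XG, dim_family_sum X0G).
Qed.

End Graph.

End Subspaces.

Lemma bin2_mul2 x : 'C(x, 2) * 2 = x * x.-1.
Proof. by elim: x => [|x IH] //; rewrite binS bin1 mulnDl IH; case: x {IH} => //= x; nia. Qed.

Lemma fact_mul_bin_prod t l : l`! ^ t * \prod_(i < t) 'C((t - i) * l, l) = (t * l)`!.
Proof.
elim: t => [|t IH]; first by rewrite big_ord0.
rewrite big_ord_recl /= subn0 expnS.
rewrite (eq_bigr (fun i : 'I_t => 'C((t - i) * l, l))); last first.
  by move=> i _; rewrite /bump /= add1n subSS.
rewrite mulnCA -mulnA IH -(bin_fact (leq_addr (t * l) l)) mulSn addKn.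
by rewrite mulnCA mulnA.
Qed.

Lemma bin2_mul t l : 'C(t * l, 2) = t * 'C(l, 2) + t * (t - 1) * l ^ 2 %/ 2.
Proof.
have -> : t * (t - 1) * l ^ 2 = 'C(t, 2) * l ^ 2 * 2 by rewrite [RHS]mulnAC bin2_mul2 subn1.
rewrite mulnK //; apply/eqP; rewrite -(eqn_pmul2r (isT : 0 < 2)) mulnDl bin2_mul2.
rewrite -[t * 'C(l, 2) * 2]mulnA bin2_mul2 [_ * l ^ 2 * 2]mulnAC bin2_mul2; apply/eqP.
by case: t => [|t]; case: l => [|l] //=; rewrite ?muln0 //; nia.
Qed.

Local Open Scope ring_scope.

Lemma natQ (x : nat) : x%:Q = x%:R :> rat.
Proof. by []. Qed.

Lemma natr_prod_subX (R : comNzRingType) (q a b : nat) : (0 < q)%N -> (a <= b)%N ->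
  (\prod_(j < a) (q ^ b - q ^ j))%N%:R
    = (q%:R : R) ^+ 'C(a, 2) * \prod_(j < a) ((q%:R : R) ^+ (b - j) - 1).
Proof.
move=> q_gt0 ab; rewrite natr_prod -bin2_sum big_mkord -prodrXr -big_split /=.
apply: eq_bigr => j _; have jb : (j <= b)%N := ltnW (leq_trans (ltn_ord j) ab).
by rewrite natrB ?leq_pexp2l // !natrX mulrBr mulr1 -exprD subnKC.
Qed.

Lemma natrX_subr1_neq0 (R : numDomainType) (q e : nat) : (1 < q)%N -> (0 < e)%N ->
  (q%:R : R) ^+ e - 1 != 0.
Proof.
move=> q_gt1 e_gt0; rewrite subr_eq0 -natrX pnatr_eq1.
by rewrite -(expn0 q) eqn_exp2l // -lt0n.
Qed.

Lemma count_exprE (q k t l : nat) : (1 < q)%N -> (0 < l)%N -> (t * l <= k)%N ->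
  count_expr q k t l * (t`! * nbases q l ^ t)%N%:R
    = (\prod_(j < t * l) (q ^ k - q ^ j))%N%:R.
Proof.
move=> q_gt1 l_gt0 tl_le_k; have q_gt0 := ltnW q_gt1.
rewrite natrM natrX !natr_prod_subX // bin2_mul /count_expr /Pq /qbin1.
rewrite !natQ; set Q := (q%:R : rat).
have Q0 : Q != 0 by rewrite pnatr_eq0 -lt0n.
have Q1 : Q - 1 != 0 by rewrite -[Q]expr1 natrX_subr1_neq0.
have fact_neq0 x : (x`!)%:R != 0 :> rat by rewrite pnatr_eq0 -lt0n fact_gt0.
have -> : \prod_(i < t) ('C((t - i) * l, l))%:R = (t * l)`!%:R / (l`! ^ t)%:R :> rat.
  by rewrite -natr_prod -fact_mul_bin_prod natrM mulrC mulKf // natrX expf_neq0.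
rewrite !prodf_div !prodr_const !card_ord exprD (mulnC t 'C(l, 2)) !exprM.
set a := \prod_(i < t * l) (Q ^+ (k - i) - 1).
set b := \prod_(j < l) (Q ^+ (l - j) - 1).
have b0 : b != 0.
  by rewrite prodf_seq_neq0; apply/allP => j _; rewrite natrX_subr1_neq0 // subn_gt0.
have -> : (Q - 1) ^+ t ^+ l = ((Q - 1) ^+ l) ^+ t by rewrite -!exprM mulnC.
rewrite natrX expr_div_n exprMn.
by field; rewrite !expf_neq0 ?fact_neq0.
Qed.

Lemma ratio_prod_subX (q k n m l : nat) : (1 < q)%N -> (n * l + m * l <= k)%N ->
  (\prod_(j < m * l) (q ^ k - q ^ (n * l + j)))%N%:R
    / (\prod_(j < m * l) (q ^ k - q ^ j))%N%:R
  = (q%:R : rat) ^+ (m * n * l ^ 2)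
    * \prod_(i < m * l) (qbin1 q (k - n * l - i) / qbin1 q (k - i)).
Proof.
move=> q_gt1 lk; have q_gt0 := ltnW q_gt1.
rewrite /qbin1 !natQ !natr_prod -prodf_div; set Q := (q%:R : rat).
have Q1 : Q - 1 != 0 by rewrite -[Q]expr1 natrX_subr1_neq0.
have -> : Q ^+ (m * n * l ^ 2) = \prod_(i < m * l) Q ^+ (n * l).
  by rewrite prodr_const card_ord -exprM; congr (_ ^+ _); nia.
rewrite -big_split; apply: eq_bigr => j _ /=.
have jk : (n * l + j < k)%N by have := ltn_ord j; lia.
rewrite !natrB ?leq_exp2l ?natrX; try lia.
have -> : Q ^+ k - Q ^+ (n * l + j) = Q ^+ (n * l) * Q ^+ j * (Q ^+ (k - n * l - j) - 1).
  by rewrite mulrBr mulr1 -!exprD; congr (_ ^+ _ - _ ^+ _); lia.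
have -> : Q ^+ k - Q ^+ j = Q ^+ j * (Q ^+ (k - j) - 1).
  by rewrite mulrBr mulr1 -!exprD; congr (_ ^+ _ - _); lia.
have Qkj : Q ^+ (k - j) - 1 != 0 by rewrite natrX_subr1_neq0 // subn_gt0; lia.
by field; rewrite Q1 Qkj expf_neq0 // pnatr_eq0 -lt0n.
Qed.

Lemma MN_exprE (q k n m l D Fs c : nat) : (1 < q)%N -> (n * l + m * l <= k)%N ->
  (0 < c)%N -> (D * c = \prod_(j < m * l) (q ^ k - q ^ (n * l + j)))%N ->
  (Fs * c = \prod_(j < m * l) (q ^ k - q ^ j))%N ->
  1 - D%:Q / Fs%:Q = MN_expr q k n m l.
Proof.
move=> q_gt1 lk c_gt0 Dc Fc; congr (1 - _).
rewrite -ratio_prod_subX // -Dc -Fc !natrM -mulf_div divff ?mulr1 //.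
by rewrite pnatr_eq0 -lt0n.
Qed.

Lemma caching_gainE (K D S Fs g : nat) : (K * D = S * g)%N -> (0 < S)%N -> (0 < Fs)%N ->
  K%:Q * (1 - (1 - D%:Q / Fs%:Q)) / (S%:Q / Fs%:Q) = g%:Q.
Proof.
move=> KD S_gt0 Fs_gt0; rewrite subKr !natQ mulrA -natrM KD natrM.
by field; rewrite !pnatr_eq0 -!lt0n S_gt0 Fs_gt0.
Qed.

Lemma indep_familyE (F : finFieldType) (k l t : nat) :
  indep_family F k l t = indep_families 0%VS l t.
Proof. by apply/setP => A; rewrite !inE add0v dimv0 add0n. Qed.

Lemma card_indep_familiesQ (F : finFieldType) (k l t : nat) : (0 < l)%N -> (t * l <= k)%N ->
  #|indep_families (k := k) (F := F) 0%VS l t|%:Q = count_expr #|F| k t l.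
Proof.
move=> l_gt0 tl_le_k; apply: (mulIf (_ : (t`! * nbases #|F| l ^ t)%N%:R != 0)).
  by rewrite pnatr_eq0 -lt0n muln_gt0 fact_gt0 expn_gt0 nbases_gt0.
by rewrite count_exprE ?finNzRing_gt1 // natQ -natrM mulnA card_indep_families0.
Qed.

Unset Implicit Arguments.

Theorem theorem4 (F : finFieldType) (k m n l : nat) :
  (0 < k)%N -> (0 < m)%N -> (0 < n)%N -> (0 < l)%N ->
  (n * l + m * l <= k)%N ->
  let q := #|F| in
  let X := indep_family F k l n in
  let Y := indep_family F k l m in
  let Z := indep_family F k l (n + m) in
  let adj := fun A B : {set {vspace 'rV[F]_k}} => (A :|: B) \in Z in
  let K := #|X| in
  let Fs := #|Y| in
  let g := 'C(n + m, n) in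
  [/\ K%:Q = count_expr q k n l,
      Fs%:Q = count_expr q k m l
    & exists D : nat,
      [/\ (* B is a (K, Fs, D) bipartite caching graph *)
          forall A, A \in X -> bip_deg Y adj A = D,
          (* M/N = 1 - D/F *)
          1 - D%:Q / Fs%:Q = MN_expr q k n m l
        & exists P : {set {set {set {vspace 'rV[F]_k}} * {set {vspace 'rV[F]_k}}}},
          let S := #|P| in
          [/\ induced_matching_cover X Y adj P,
              S%:Q = count_expr q k (n + m) l,
              forall C, C \in P -> #|C| = g
            & (* gamma = K (1 - M/N) / R with R = S / F *)
              K%:Q * (1 - (1 - D%:Q / Fs%:Q)) / (S%:Q / Fs%:Q) = g%:Q]]].
Proof.
move=> _ _ _ l_gt0 lk /=.
have [nk mk nmk] : [/\ n * l <= k, m * l <= k & (n + m) * l <= k]%N by split; lia.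
rewrite !indep_familyE.
have /card_gt0P[X0 X0G] : (0 < #|indep_families (F := F) (k := k) 0%VS l n|)%N.
  exact: indep_families_gt0.
have regD := indep_graph_regular m l_gt0 X0G.
set D := #|indep_families (family_sum X0) l m|.
split; [exact: card_indep_familiesQ | exact: card_indep_familiesQ | exists D; split => //].
  apply: (MN_exprE (finNzRing_gt1 F) lk (_ : 0 < m`! * nbases #|F| l ^ m)%N).
  - by rewrite muln_gt0 fact_gt0 expn_gt0 nbases_gt0.
  - by rewrite mulnA card_indep_families // (dim_family_sum X0G).
  - by rewrite mulnA card_indep_families0.
set P := [set splittings n Z | Z in indep_families (F := F) (k := k) 0%VS l (n + m)].
have cardP C : C \in P -> #|C| = 'C(n + m, n).
  by case/imsetP => Z ZG ->; rewrite card_splittings; case/indep_familiesP: ZG => ->.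
have coverP := splittings_cover F k l n m.
exists P; rewrite card_splittings_cover; split => //; first exact: card_indep_familiesQ.
apply: caching_gainE; rewrite ?indep_families_gt0 //.
by rewrite -(card_bip_edges_regular regD) (card_bip_edges_cover coverP cardP) card_splittings_cover.
Qed.
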